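(* Let $L,n$ be positive integers and $B=(B_1,\dots,B_L)\in\mathcal M(L,n)$. Then $\rho_N(B)\in\mathrm{MLQ}_0(\mu,n)$ for some partition $\mu$, and $\rho_Q(B)$ is a semistandard Young tableau of shape $\mu'$ with content $(|B_1|,\dots,|B_L|)$.
   Context: $\mathcal M(L,n)$ is the set of tuples $B=(B_1,\dots,B_L)$ of subsets of $[n]$, drawn with rows $1..L$ bottom to top and columns $1..n$ left to right, ball in $(r,j)$ iff $j\in B_r$; tuples whose top rows are empty are identified with the tuple obtained by deleting those rows. For a partition $\mu$ ($\mu'$ its conjugate) with $n\ge\ell(\mu)$, $\mathrm{MLQ}(\mu,n)$ is the set of tuples $(B_1,\dots,B_{\mu_1})$ with $|B_j|=\mu'_j$. Diagrams are in French notation (row 1 at the bottom); semistandard means weakly increasing along rows, strictly increasing up columns; content $(c_1,c_2,\dots)$ counts entries equal to $1,2,\dots$. The column word $\mathrm{cw}(B)$ scans columns left to right, each top to bottom, recording row numbers of balls. Major index: for $M\in\mathrm{MLQ}(\mu,n)$, for $r=\mu_1,\dots,2$, unlabelled balls of row $r$ get label $r$; then balls of row $r$ in decreasing label order (left to right among ties) are each paired with the first unlabelled ball of row $r-1$ weakly to the right, cyclically modulo $n$, which gets the same label; a pairing wraps if the lower ball is strictly left of the upper. $\operatorname{maj}(M)=\sum(\ell(p)-r(p)+1)$ over wrapping pairings ($r(p)$ upper row, $\ell(p)$ label); $\mathrm{MLQ}_0(\mu,n)$ is the set of $M$ with $\operatorname{maj}(M)=0$. Collapsing. $\mathrm{Par}_i(w)$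 writes ''('' for each letter $i+1$ and '')'' for each letter $i$ of $w$, left to right, and iteratively matches a ''('' with a '')'' to its right when adjacent or separated only by matched parentheses. $e_i^\star(B)$ moves every ball of row $i+1$ whose letter in $\mathrm{cw}(B)$ is unmatched in $\mathrm{Par}_i(\mathrm{cw}(B))$ down to row $i$ in the same column. Products act right to left; $e^\star_{[a,b]}=e^\star_ae^\star_{a+1}\cdots e^\star_b$; $\rho_N(B)=e^\star_{[1,L-1]}\cdots e^\star_{[1,1]}(B)$. Let $N^{(k)}$ be the bottom $k$ rows of $e^\star_{[1,k-1]}\cdots e^\star_{[1,1]}(B)$ for $1\le k\le L$, $N^{(0)}$ empty; $\rho_Q(B)$ is the filling (in French notation) whose row $r$ consists of $|N^{(i)}_r|-|N^{(i-1)}_r|$ entries equal to $i$ for each $i=1,\dots,L$ (with $|N^{(i-1)}_i|=0$), written in weakly increasing order. *)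

From mathcomp Require Import all_boot.
Set Implicit Arguments. Unset Strict Implicit. Unset Printing Implicit Defensive.

(* A ball arrangement B = (B_1,...,B_L) in M(L,n) is a seq {set 'I_n} of size L;
   row r (1-based) is [row B r] = nth set0 B (r-1); column j (1-based) is the
   ordinal j-1. Rows beyond size B are empty (identification of empty top rows). *)

Definition row n (B : seq {set 'I_n}) (r : nat) : {set 'I_n} := nth set0 B r.-1.

(* column word, as the list of (row, column) positions of the letters:
   columns left to right, each column top to bottom; the letter is the row. *)
Definition cw n (B : seq {set 'I_n}) : seq (nat * nat) :=
  flatten [seq [seq (r, nat_of_ord j) | r <- rev (iota 1 (size B)) & j \in row B r]
          | j <- enum 'I_n].

(* Par_i: letters i+1 are "(", letters i are ")"; the unmatched "(" are those left
   on the stack by the usual left-to-right bracket matching. *)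
Definition unmatched_open (i : nat) (w : seq (nat * nat)) : seq (nat * nat) :=
  foldl (fun st p => if p.1 == i.+1 then p :: st
                     else if p.1 == i then behead st else st) [::] w.

Definition estar n (i : nat) (B : seq {set 'I_n}) : seq {set 'I_n} :=
  let U := [set j : 'I_n | (i.+1, nat_of_ord j) \in unmatched_open i (cw B)] in
  set_nth set0 (set_nth set0 B i (row B i.+1 :\: U)) i.-1 (row B i :|: U).

(* e^star_{[1,k]} = e_1 e_2 ... e_k  (e_k applied first) *)
Definition eseg1 n (k : nat) (B : seq {set 'I_n}) : seq {set 'I_n} :=
  foldr (@estar n) B (iota 1 k).

Definition rhoNk n (k : nat) (B : seq {set 'I_n}) : seq {set 'I_n} :=
  foldl (fun B' j => eseg1 j B') B (iota 1 k.-1).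

Definition rhoN n (B : seq {set 'I_n}) : seq {set 'I_n} := rhoNk (size B) B.

(* |N^{(k)}_r| : size of row r of the bottom k rows (0 if r is not among them) *)
Definition Nsz n (B : seq {set 'I_n}) (k r : nat) : nat :=
  if (0 < r <= k) then #|row (rhoNk k B) r| else 0.

(* rho_Q(B) as a list of rows (row 1 first), each weakly increasing *)
Definition rhoQ n (B : seq {set 'I_n}) : seq (seq nat) :=
  [seq flatten [seq nseq (Nsz B i r - Nsz B i.-1 r) i | i <- iota 1 (size B)]
  | r <- iota 1 (size B)].

Definition is_partition (mu : seq nat) : bool :=
  sorted geq mu && all (fun x => 0 < x) mu.

Definition conj_part (mu : seq nat) (j : nat) : nat := count (fun x => j <= x) mu.

Definition rowcols n (M : seq {set 'I_n}) (r : nat) : seq nat :=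
  sort leq [seq nat_of_ord j | j <- enum (row M r)].

(* first available column weakly right of c, cyclically; flag = wrapped *)
Definition pick_cyc (c : nat) (avail : seq nat) : nat * bool :=
  match [seq x <- avail | c <= x] with
  | x :: _ => (x, false)
  | [::] => (head 0 avail, true)
  end.

(* order on labelled balls (column, label): decreasing label, ties left to right *)
Definition lab_ord (p q : nat * nat) : bool :=
  (q.2 < p.2) || ((p.2 == q.2) && (p.1 <= q.1)).

(* pairing of the (fully labelled) row r with row r-1 (columns [below]);
   returns the full labelling of row r-1 (unpaired balls get label r-1)
   and the contribution to maj of the wrapping pairings *)
Definition pair_step (r : nat) (lab : seq (nat * nat)) (below : seq nat)
  : seq (nat * nat) * nat :=
  let: (avail, newlab, m) :=
    foldl (fun st p =>
             let: (av, nl, m) := st in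
             let: (x, w) := pick_cyc p.1 av in
             (rem x av, (x, p.2) :: nl, m + (if w then p.2 - r + 1 else 0)))
          (below, [::], 0) (sort lab_ord lab) in
  (newlab ++ [seq (c, r.-1) | c <- avail], m).

Fixpoint maj_aux n (M : seq {set 'I_n}) (k r : nat) (lab : seq (nat * nat)) : nat :=
  match k with
  | 0 => 0
  | k'.+1 => let: (lab', m) := pair_step r lab (rowcols M r.-1) in
             m + maj_aux M k' r.-1 lab'
  end.

Definition maj n (M : seq {set 'I_n}) : nat :=
  let L := size M in maj_aux M L.-1 L [seq (c, L) | c <- rowcols M L].

(* M in MLQ(mu, n) (up to deleting empty top rows) *)
Definition in_MLQ n (mu : seq nat) (M : seq {set 'I_n}) : Prop :=
  is_partition mu /\ size mu <= n /\
  (forall r, 0 < r -> #|row M r| = conj_part mu r).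

Definition in_MLQ0 n (mu : seq nat) (M : seq {set 'I_n}) : Prop :=
  in_MLQ mu M /\ maj M = 0.

(* T (rows listed bottom to top, French) is a semistandard tableau of shape
   [shape] (row r, 1-based, has length shape r) with content [content] *)
Definition is_ssyt (T : seq (seq nat)) (shape content : nat -> nat) : Prop :=
  (forall r, size (nth [::] T r) = shape r.+1) /\
  (forall r, sorted leq (nth [::] T r)) /\
  (forall r c, c < size (nth [::] T r.+1) ->
     nth 0 (nth [::] T r) c < nth 0 (nth [::] T r.+1) c) /\
  (forall i, count_mem i (flatten T) = content i).

(* Write [card_from X c] for the number of balls of a row X in the columns c, c+1, ...,
   and say that X is suffix-dominated by Y when card_from X <= card_from Y pointwise.
   Bracket matching in the column word shows that e_i^* moves down a set U of balls of
   row i+1 with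
     card_from U c + card_from (row i) c
       = card_from (row i+1) c + #(letters i left unmatched in the columns >= c).
   Hence the new row i+1 is dominated by the old row i, and (looking at columns where no
   letter i is left unmatched) U is dominated by any set covering the excess of row i+1
   over row i.  So if rows 1..k of A form a dominance chain, then in e^*_[1,k](A) each
   row r <= k dominates the old row r while each row r+1 <= k+1 is dominated by the old
   row r; thus rows 1..k+1 form a chain.  Therefore rho_N(B) is a chain: its row lengths
   are the conjugate of a partition mu, and every pairing of the major index finds its
   partner weakly to the right, so maj = 0.  The same two comparisons say that N^(i-1)
   and N^(i) differ by a horizontal strip, which makes rho_Q(B) semistandard, and since
   e^* keeps the number of balls in rows 1..i, its content is (|B_1|, ..., |B_L|). *)

From mathcomp Require Import all_boot zify.
Set Implicit Arguments. Unset Strict Implicit. Unset Printing Implicit Defensive.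

Definition bracket_step (i : nat) (st : seq (nat * nat)) (p : nat * nat) :=
  if p.1 == i.+1 then p :: st else if p.1 == i then behead st else st.

Fixpoint unmatched_close (i : nat) (w : seq (nat * nat)) : nat :=
  if w is p :: w' then
    if p.1 == i.+1 then (unmatched_close i w').-1
    else if p.1 == i then (unmatched_close i w').+1
    else unmatched_close i w'
  else 0.

Lemma foldl_bracket_step i w st :
  foldl (bracket_step i) st w = unmatched_open i w ++ drop (unmatched_close i w) st.
Proof.
rewrite /unmatched_open -/(bracket_step i).
elim: w st => [|p w IH] st /=; first by rewrite drop0.
rewrite IH [in RHS]IH -catA; congr (_ ++ _); rewrite /bracket_step.
case: ifP => _; first by case: (unmatched_close i w) => [|e]; rewrite /= ?drop0.
case: ifP => _ //=; case: st => [|x st] /=; rewrite ?drop_nil //.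
Qed.

Lemma mem_unmatched_open i w x : x \in unmatched_open i w -> x \in w.
Proof.
rewrite /unmatched_open -/(bracket_step i).
have : x \notin ([::] : seq (nat * nat)) by [].
elim: w [::] => [|p w IH] st /= Nst; first by rewrite (negbTE Nst).
rewrite in_cons; have [//|Nxp] := eqVneq x p.
move=> Hx; rewrite (IH _ _ Hx) ?orbT //; rewrite /bracket_step.
case: ifP => _; first by rewrite in_cons negb_or Nxp.
by case: ifP => _ //; apply: contra Nst; apply: mem_behead.
Qed.

Definition off_letters (i : nat) (w : seq (nat * nat)) : bool :=
  all (fun p => (p.1 != i) && (p.1 != i.+1)) w.

Lemma foldl_bracket_step_off i st w :
  off_letters i w -> foldl (bracket_step i) st w = st.
Proof.
elim: w st => [|p w IH] st //= /andP[/andP[Np1 Np2] offw].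
by rewrite IH // /bracket_step (negbTE Np1) (negbTE Np2).
Qed.

Lemma unmatched_close_cat_off i u v :
  off_letters i u -> unmatched_close i (u ++ v) = unmatched_close i v.
Proof.
elim: u => [|p u IH] //= /andP[/andP[Np1 Np2] offu].
by rewrite (negbTE Np1) (negbTE Np2) IH.
Qed.

Lemma count_iota_le x m : x <= m -> count (fun j => j <= x) (iota 1 m) = x.
Proof.
move=> le_xm; rewrite -(subnKC le_xm) iotaD count_cat.
rewrite (@eq_in_count _ _ predT (iota 1 x)) ?count_predT ?size_iota; last first.
  by move=> j; rewrite mem_iota /=; lia.
rewrite (@eq_in_count _ _ pred0) ?count_pred0 ?addn0 // => j.
by rewrite mem_iota /=; lia.
Qed.

Section ConjugateShape.
Variables (f : nat -> nat) (L : nat).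
Hypothesis f_nonincr : forall r, 0 < r -> f r.+1 <= f r.
Hypothesis f_out : forall r, L < r -> f r = 0.

Definition conj_shape := [seq count (fun r => j <= f r) (iota 1 L) | j <- iota 1 (f 1)].

Lemma f_nonincr_le r1 r2 : 0 < r1 <= r2 -> f r2 <= f r1.
Proof.
move=> /andP[r1_gt0 le_r12]; rewrite -(subnKC le_r12).
elim: (r2 - r1) => [|d IH]; first by rewrite addn0.
by apply: leq_trans IH; rewrite addnS f_nonincr // addn_gt0 r1_gt0.
Qed.

Lemma conj_part_conj_shape r : 0 < r -> conj_part conj_shape r = f r.
Proof.
move=> r_gt0; rewrite /conj_part /conj_shape count_map.
rewrite -[RHS](count_iota_le (m := f 1)); last by apply: f_nonincr_le; lia.
apply: eq_in_count => j; rewrite mem_iota => rng_j /=.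
have [le_jr | lt_rj] := leqP j (f r).
  have le_rL : r <= L by case: (leqP r L) => // /f_out; lia.
  rewrite -(subnKC le_rL) iotaD count_cat.
  rewrite (@eq_in_count _ _ predT (iota 1 r)) ?count_predT ?size_iota ?leq_addr //.
  by move=> r'; rewrite mem_iota /= => rng_r'; apply: leq_trans le_jr (f_nonincr_le _); lia.
apply/negbTE; rewrite -ltnNge.
have [le_Lr | lt_rL] := leqP L r.-1.
  by apply: leq_ltn_trans (count_size _ _) _; rewrite size_iota; lia.
rewrite -(subnKC (ltnW lt_rL)) iotaD count_cat.
rewrite [X in _ + X](@eq_in_count _ _ pred0) ?count_pred0 ?addn0; last first.
  move=> r'; rewrite mem_iota /= => rng_r'; apply/negbTE; rewrite -ltnNge.
  by apply: leq_ltn_trans lt_rj; apply: f_nonincr_le; lia.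
by apply: leq_ltn_trans (count_size _ _) _; rewrite size_iota; lia.
Qed.

Lemma conj_shape_partition : is_partition conj_shape.
Proof.
apply/andP; split.
  rewrite /conj_shape sorted_map; apply: sub_sorted (iota_ltn_sorted 1 (f 1)) => x y lt_xy /=.
  by apply: sub_count => r' /=; lia.
apply/allP => x /mapP[j]; rewrite mem_iota => rng_j ->; rewrite -has_count.
have [L0 | L_gt0] := posnP L; first by have := @f_out 1; rewrite L0 => /(_ isT); lia.
by apply/hasP; exists 1; rewrite ?mem_iota /=; lia.
Qed.

Lemma size_conj_shape : size conj_shape = f 1.
Proof. by rewrite size_map size_iota. Qed.
End ConjugateShape.

Lemma nth_le_count (s : seq nat) c v : sorted leq s -> c < size s ->
  (nth 0 s c <= v) = (c < count (fun x => x <= v) s).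
Proof.
elim: s c => [|x s IH] c //= sorted_xs lt_cs.
have x_min : all (fun y => x <= y) s by apply: order_path_min sorted_xs; exact: leq_trans.
have count0 : v < x -> count (fun y => y <= v) s = 0.
  move=> lt_vx; apply/eqP; rewrite -leqn0 leqNgt -has_count; apply/hasP => -[y y_s le_yv].
  by move/allP: x_min => /(_ y y_s); lia.
case: c lt_cs => [|c] lt_cs /=; first by case: (leqP x v) => //= lt_vx; rewrite count0.
have [le_xv | lt_vx] := leqP x v.
  by rewrite IH ?add1n ?ltnS //; apply: path_sorted sorted_xs.
rewrite add0n count0 //; apply/negbTE; rewrite -ltnNge.
by have /(allP x_min) /= := mem_nth 0 lt_cs; lia.
Qed.

Definition strip_row (a : nat -> nat) m := flatten [seq nseq (a i - a i.-1) i | i <- iota 1 m].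

Lemma strip_rowS a m : strip_row a m.+1 = strip_row a m ++ nseq (a m.+1 - a m) m.+1.
Proof.
by rewrite /strip_row -[m.+1]addn1 iotaD map_cat flatten_cat /= cats0 add1n add0n addn1.
Qed.

Lemma mem_strip_row a m x : x \in strip_row a m -> 0 < x <= m.
Proof. by case/flattenP => s /mapP[i]; rewrite mem_iota => rng_i -> /nseqP[-> _]; lia. Qed.

Lemma sorted_strip_row a m : sorted leq (strip_row a m).
Proof.
rewrite (sorted_pairwise leq_trans); elim: m => [|m IH] //.
rewrite strip_rowS pairwise_cat IH /=; apply/andP; split.
  by apply/allrelP => x y /mem_strip_row rng_x /nseqP[-> _]; lia.
by elim: (_ - _) => //= k ->; rewrite andbT; apply/allP => y /nseqP[-> _].
Qed.

Lemma count_mem_strip_row a m i :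
  count_mem i (strip_row a m) = if 0 < i <= m then a i - a i.-1 else 0.
Proof.
elim: m => [|m IH]; first by rewrite /strip_row /=; case: ifP => //; lia.
rewrite strip_rowS count_cat count_nseq IH /=.
have [<- | Nim] := eqVneq m.+1 i; first by rewrite ltnn leqnn andbF andbT mul1n.
by rewrite mul0n addn0; congr (if _ then _ else _); apply/idP/idP; lia.
Qed.

Section MonotoneStrips.
Variables (a : nat -> nat).
Hypothesis a0 : a 0 = 0.

Lemma size_strip_row m : (forall i, i < m -> a i <= a i.+1) -> size (strip_row a m) = a m.
Proof.
elim: m => [|m IH] a_mono //; rewrite strip_rowS size_cat size_nseq IH; last first.
  by move=> i lt_im; apply: a_mono; lia.
by have := a_mono m (ltnSn m); lia.
Qed.

Lemma count_le_strip_row m v : (forall i, i < m -> a i <= a i.+1) ->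
  count (fun x => x <= v) (strip_row a m) = a (minn v m).
Proof.
elim: m => [|m IH] a_mono; first by rewrite minn0.
rewrite strip_rowS count_cat count_nseq IH; last by move=> i lt_im; apply: a_mono; lia.
have := a_mono m (ltnSn m); have [lt_mv | le_vm] /= := leqP m.+1 v.
  by rewrite (minn_idPr (ltnW lt_mv)); lia.
by rewrite (minn_idPl (le_vm : v <= m)); lia.
Qed.
End MonotoneStrips.

(* [a i r] is the length of row [r] of the shape filled by the entries <= i; [a_strip]
   says that consecutive shapes differ by a horizontal strip. *)
Section StripTableau.
Variables (a : nat -> nat -> nat) (L : nat).
Hypothesis a0 : forall r, a 0 r = 0.
Hypothesis a_mono : forall i r, i < L -> a i r <= a i.+1 r.
Hypothesis a_strip : forall i r, 0 < i <= L -> a i r.+2 <= a i.-1 r.+1.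

Definition strip_tableau := [seq strip_row (a^~ r) L | r <- iota 1 L].

Lemma nth_strip_tableau r :
  nth [::] strip_tableau r = if r < L then strip_row (a^~ r.+1) L else [::].
Proof.
case: ltnP => [lt_rL | le_Lr]; last by rewrite nth_default // size_map size_iota.
by rewrite (nth_map 0) ?size_iota // nth_iota.
Qed.

Lemma strip_tableau_col_strict r c : c < size (nth [::] strip_tableau r.+1) ->
  nth 0 (nth [::] strip_tableau r) c < nth 0 (nth [::] strip_tableau r.+1) c.
Proof.
rewrite !nth_strip_tableau; case: ifP => // lt_rL; rewrite ifT; last by lia.
set y := strip_row _ L; set x := strip_row _ L => lt_cy.
set v := nth 0 y c; have /mem_strip_row rng_v : v \in y by apply: mem_nth.
have count_le s v' : count (fun z => z <= v') (strip_row (a^~ s) L) = a (minn v' L) s.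
  by apply: count_le_strip_row => // i; apply: a_mono.
have lt_c_av : c < a v r.+2.
  by rewrite -(minn_idPl (proj2 (andP rng_v))) -count_le -nth_le_count ?sorted_strip_row.
have : c < count (fun z => z <= v.-1) x.
  by rewrite count_le (minn_idPl (_ : v.-1 <= L)); [apply: leq_trans (a_strip r rng_v) | lia].
have [lt_cx | le_xc] := ltnP c (size x); last by move/leq_trans/(_ (count_size _ _)); lia.
by rewrite -nth_le_count ?sorted_strip_row //; lia.
Qed.

Lemma count_mem_strip_tableau i :
  count_mem i (flatten strip_tableau) =
  if 0 < i <= L then \sum_(1 <= r < L.+1) (a i r - a i.-1 r) else 0.
Proof.
rewrite count_flatten -map_comp sumnE big_map /=.
have -> : iota 1 L = index_iota 1 L.+1 by rewrite /index_iota subSS subn0.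
under eq_bigr => r _ do rewrite /= count_mem_strip_row.
by case: ifP => // _; rewrite big1.
Qed.

Lemma strip_tableau_ssyt (shape content : nat -> nat) :
  (forall r, 0 < r -> shape r = if r <= L then a L r else 0) ->
  (forall i, content i = count_mem i (flatten strip_tableau)) ->
  is_ssyt strip_tableau shape content.
Proof.
move=> shapeE contentE; split; [|split; [|split]] => //.
- move=> r; rewrite nth_strip_tableau shapeE //; case: ifP => // _.
  by apply: size_strip_row => // i; apply: a_mono.
- by move=> r; rewrite nth_strip_tableau; case: ifP => // _; apply: sorted_strip_row.
- exact: strip_tableau_col_strict.
Qed.
End StripTableau.

Definition pair_fold (r : nat) (st : seq nat * seq (nat * nat) * nat) (p : nat * nat) :=
  let: (av, nl, m) := st in
  let: (x, w) := pick_cyc p.1 av in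
  (rem x av, (x, p.2) :: nl, m + (if w then p.2 - r + 1 else 0)).

Lemma hall_rem (P av : seq nat) b x :
  x \in av -> b <= x -> (forall y, y \in av -> b <= y -> x <= y) ->
  (forall c, count (fun y => c <= y) (b :: P) <= count (fun y => c <= y) av) ->
  forall c, count (fun y => c <= y) P <= count (fun y => c <= y) (rem x av).
Proof.
move=> x_av le_bx x_min hall c.
have count_av c' :
    count (fun y => c' <= y) av = (c' <= x) + count (fun y => c' <= y) (rem x av).
  by rewrite (permP (perm_to_rem x_av)) /=.
have := hall c; rewrite /= count_av.
have [le_cb | lt_bc] := leqP c b; first by rewrite (leq_trans le_cb le_bx) /= !add1n ltnS.
have [le_cx _ | //] := leqP c x.
have same : count (fun y => c <= y) av = count (fun y => b <= y) av.
  apply: eq_in_count => y y_av /=; apply/idP/idP => [le_cy | le_by].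
    exact: leq_trans (ltnW lt_bc) le_cy.
  exact: leq_trans le_cx (x_min y y_av le_by).
have := hall b; rewrite /= leqnn add1n -same count_av le_cx add1n ltnS => le_P.
by apply: leq_trans le_P; apply: sub_count => y /=; apply: leq_trans (ltnW lt_bc).
Qed.

Lemma pair_fold_nowrap r P av nl m : sorted leq av ->
  (forall c, count (fun x => c <= x) (map fst P) <= count (fun x => c <= x) av) ->
  let: (av', nl', m') := foldl (pair_fold r) (av, nl, m) P in
  m' = m /\ perm_eq (map fst nl' ++ av') (map fst nl ++ av).
Proof.
elim: P av nl m => [|p P IH] av nl m sorted_av hall /=; first by [].
have p_le := hall p.1; rewrite /= leqnn add1n in p_le.
case E: [seq y <- av | p.1 <= y] => [|x s].
  have : 0 < size [seq y <- av | p.1 <= y].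
    by rewrite size_filter; apply: leq_ltn_trans (leq0n _) p_le.
  by rewrite E.
have : x \in [seq y <- av | p.1 <= y] by rewrite E mem_head.
rewrite mem_filter => /andP[le_px x_av].
have x_min y : y \in av -> p.1 <= y -> x <= y.
  move=> y_av le_py; have : y \in x :: s by rewrite -E mem_filter le_py.
  rewrite inE => /predU1P[-> // | y_s].
  have : sorted leq (x :: s) by rewrite -E; apply: sorted_filter => //; exact: leq_trans.
  by move/(order_path_min leq_trans)/allP/(_ y y_s).
rewrite /pair_fold /pick_cyc E /= addn0.
have sorted_rem : sorted leq (rem x av) := subseq_sorted leq_trans (rem_subseq x av) sorted_av.
have := IH (rem x av) ((x, p.2) :: nl) m sorted_rem (hall_rem x_av le_px x_min hall).
case: foldl => [[av' nl'] m'] [-> perm']; split => //.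
apply: perm_trans perm' _ => /=; rewrite -cat1s perm_catCA perm_cat2l perm_sym.
exact: perm_to_rem.
Qed.

Section Balls.
Variable n : nat.
Implicit Types (X Y : {set 'I_n}) (A B M : seq {set 'I_n}).

Definition has_ball X (j : nat) : bool :=
  if insub j is Some k then k \in X else false.

Lemma has_ball_ord X (k : 'I_n) : has_ball X k = (k \in X).
Proof. by rewrite /has_ball valK. Qed.

Definition col_word B (j : nat) : seq (nat * nat) :=
  [seq (r, j) | r <- rev (iota 1 (size B)) & has_ball (row B r) j].

Definition cw_before B c := flatten (map (col_word B) (iota 0 c)).
Definition cw_from B c := flatten (map (col_word B) (iota c (n - c))).

Lemma cw_cat B c : c <= n -> cw B = cw_before B c ++ cw_from B c.
Proof.
move=> le_cn; rewrite /cw_before /cw_from -flatten_cat -map_cat -iotaD subnKC //.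
rewrite /cw -val_enum_ord -map_comp; congr flatten; apply: eq_map => j /=.
by congr map; apply: eq_filter => r; rewrite has_ball_ord.
Qed.

Lemma cw_fromS B c : c < n -> cw_from B c = col_word B c ++ cw_from B c.+1.
Proof. by move=> lt_cn; rewrite /cw_from -[n - c]prednK ?subn_gt0 // -subnS. Qed.

Lemma cw_from_out B c : n <= c -> cw_from B c = [::].
Proof. by move=> le_nc; rewrite /cw_from (eqP le_nc). Qed.

Lemma mem_col_word B j x : x \in col_word B j -> x.2 = j.
Proof. by case/mapP => r _ ->. Qed.

Lemma mem_cw_before B c x : x \in cw_before B c -> x.2 < c.
Proof.
by case/flattenP => s /mapP[j]; rewrite mem_iota => /andP[_ lt_jc] -> /mem_col_word ->.
Qed.

Lemma mem_cw_from B c x : x \in cw_from B c -> c <= x.2.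
Proof.
by case/flattenP => s /mapP[j]; rewrite mem_iota => /andP[le_cj _] -> /mem_col_word ->.
Qed.

Lemma col_word_split B i j : 0 < i < size B ->
  exists u v, [/\ off_letters i u, off_letters i v &
    col_word B j = u ++ [seq (r, j) | r <- [:: i.+1; i] & has_ball (row B r) j] ++ v].
Proof.
move=> /andP[i_gt0 lt_iB]; rewrite /col_word.
have -> : iota 1 (size B) = iota 1 i.-1 ++ [:: i; i.+1] ++ iota i.+2 (size B - i.+1).
  rewrite {1}(_ : size B = i.-1 + (2 + (size B - i.+1))) ?iotaD; last by lia.
  by rewrite (_ : 1 + i.-1 = i) 1?(_ : i + 2 = i.+2) //; lia.
rewrite !rev_cat !filter_cat !map_cat -catA.
set hi := map _ (filter _ (rev (iota i.+2 _))); set lo := map _ (filter _ (rev (iota 1 _))).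
exists hi, lo; split => //; apply/allP => x /mapP[r];
  rewrite mem_filter mem_rev mem_iota => /andP[_ rng_r] -> /=.
all: by apply/andP; split; apply/eqP; lia.
Qed.

Lemma foldl_col_word B i j st : 0 < i < size B ->
  foldl (bracket_step i) st (col_word B j) =
  let st' := if has_ball (row B i.+1) j then (i.+1, j) :: st else st in
  if has_ball (row B i) j then behead st' else st'.
Proof.
move=> /(col_word_split j) [u [v [offu offv ->]]].
rewrite !foldl_cat (foldl_bracket_step_off _ offv) (foldl_bracket_step_off _ offu).
rewrite /bracket_step /=.
by case: (has_ball (row B i.+1) j); case: (has_ball (row B i) j);
  rewrite /= ?eqxx ?(ltn_eqF (ltnSn i)).
Qed.

Lemma unmatched_close_col_word B i j w : 0 < i < size B ->
  unmatched_close i (col_word B j ++ w) =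
  let e := if has_ball (row B i) j then (unmatched_close i w).+1
           else unmatched_close i w in
  if has_ball (row B i.+1) j then e.-1 else e.
Proof.
move=> /(col_word_split j) [u [v [offu offv ->]]].
rewrite -!catA (unmatched_close_cat_off _ offu) /=.
by case: (has_ball (row B i.+1) j); case: (has_ball (row B i) j);
  rewrite /= ?eqxx ?(ltn_eqF (ltnSn i)) (unmatched_close_cat_off _ offv).
Qed.

Definition moved B i : {set 'I_n} :=
  [set j : 'I_n | (i.+1, nat_of_ord j) \in unmatched_open i (cw B)].

Lemma has_ball_moved B i c : 0 < i < size B -> c < n ->
  has_ball (moved B i) c =
  [&& has_ball (row B i.+1) c, ~~ has_ball (row B i) c
    & unmatched_close i (cw_from B c.+1) == 0].
Proof.
move=> lt_iB lt_cn.
rewrite -[c]/(nat_of_ord (Ordinal lt_cn)) has_ball_ord inE /=.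
rewrite (cw_cat B (ltnW lt_cn)) cw_fromS // /unmatched_open -/(bracket_step i) !foldl_cat.
rewrite foldl_bracket_step foldl_col_word // -/(unmatched_open i _) mem_cat /=.
have /negbTE -> : (i.+1, c) \notin unmatched_open i (cw_from B c.+1).
  by apply/negP => /mem_unmatched_open /mem_cw_from /=; rewrite ltnn.
have Nbefore : (i.+1, c) \notin unmatched_open i (cw_before B c).
  by apply/negP => /mem_unmatched_open /mem_cw_before /=; rewrite ltnn.
have Nbehead : (i.+1, c) \notin behead (unmatched_open i (cw_before B c)).
  by apply: contra Nbefore; apply: mem_behead.
have notin_drop k s : (i.+1, c) \notin s -> ((i.+1, c) \in drop k s) = false.
  by move=> Ns; apply/negbTE; apply: contra Ns; apply: mem_drop.
case: (has_ball (row B i.+1) c); case: (has_ball (row B i) c) => /=.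
- by rewrite notin_drop.
- by case: unmatched_close => [|e] /=; rewrite ?inE ?eqxx ?notin_drop.
- by rewrite notin_drop.
- by rewrite notin_drop.
Qed.

Definition card_from X c := \sum_(c <= j < n) has_ball X j.

Lemma card_fromS X c : c < n -> card_from X c = has_ball X c + card_from X c.+1.
Proof. by move=> lt_cn; rewrite /card_from big_ltn. Qed.

Lemma card_from_out X c : n <= c -> card_from X c = 0.
Proof. by move=> le_nc; rewrite /card_from big_geq. Qed.

Lemma card_from0 X : card_from X 0 = #|X|.
Proof.
rewrite /card_from big_mkord -sum1_card [RHS]big_mkcond /=.
by apply: eq_bigr => j _; rewrite has_ball_ord; case: (j \in X).
Qed.

Lemma le_card_from X c c' : c <= c' -> card_from X c' <= card_from X c.
Proof.
move=> le_cc'; have [le_c'n | /ltnW/card_from_out -> //] := leqP c' n.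
by rewrite /card_from (big_cat_nat le_cc' le_c'n) leq_addl.
Qed.

Lemma card_fromU X Y c : [disjoint X & Y] ->
  card_from (X :|: Y) c = card_from X c + card_from Y c.
Proof.
move=> dXY; rewrite /card_from -big_split; apply: eq_bigr => j _ /=.
rewrite /has_ball; case: insub => [k|] //; rewrite in_setU.
by case: (boolP (k \in X)) => [/(disjointFr dXY) -> | _].
Qed.

Lemma card_fromD X Y c : Y \subset X ->
  card_from (X :\: Y) c + card_from Y c = card_from X c.
Proof.
move=> sYX; rewrite /card_from -big_split; apply: eq_bigr => j _ /=.
rewrite /has_ball; case: insub => [k|] //; rewrite in_setD.
by case: (boolP (k \in Y)) => [/(subsetP sYX) -> | _]; rewrite ?addn0.
Qed.

Lemma moved_sub B i : 0 < i < size B -> moved B i \subset row B i.+1 :\: row B i.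
Proof.
move=> lt_iB; apply/subsetP => k k_moved.
have := has_ball_moved lt_iB (ltn_ord k); rewrite !has_ball_ord k_moved.
by case/esym/and3P => in_hi Nin_lo _; rewrite inE Nin_lo.
Qed.

Lemma size_estar B i : 0 < i < size B -> size (estar i B) = size B.
Proof. by move=> lt_iB; rewrite !size_set_nth; lia. Qed.

Lemma row_estar B i r : 0 < i -> 0 < r ->
  row (estar i B) r =
  if r == i then row B i :|: moved B i
  else if r == i.+1 then row B i.+1 :\: moved B i else row B r.
Proof.
move=> i_gt0 r_gt0; rewrite /row /estar /= !nth_set_nth /=.
have -> : (r.-1 == i.-1) = (r == i) by apply/eqP/eqP; lia.
rewrite nth_set_nth /=.
by have -> : (r.-1 == i) = (r == i.+1) by apply/eqP/eqP; lia.
Qed.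

Lemma card_from_estar_lo B i c : 0 < i < size B ->
  card_from (row (estar i B) i) c = card_from (row B i) c + card_from (moved B i) c.
Proof.
move=> lt_iB; have /andP[i_gt0 _] := lt_iB; rewrite row_estar // eqxx card_fromU //.
by have /subsetDP[_] := moved_sub lt_iB; rewrite disjoint_sym.
Qed.

Lemma card_from_estar_hi B i c : 0 < i < size B ->
  card_from (row (estar i B) i.+1) c + card_from (moved B i) c = card_from (row B i.+1) c.
Proof.
move=> lt_iB; have /andP[i_gt0 _] := lt_iB.
rewrite row_estar // (gtn_eqF (ltnSn i)) eqxx card_fromD //.
by have /subsetDP[] := moved_sub lt_iB.
Qed.

Lemma row_estar_out B i r : 0 < i -> 0 < r -> r != i -> r != i.+1 ->
  row (estar i B) r = row B r.
Proof. by move=> i_gt0 r_gt0 Nri NriS; rewrite row_estar // (negbTE Nri) (negbTE NriS). Qed.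

Lemma card_from_moved B i c : 0 < i < size B ->
  card_from (moved B i) c + card_from (row B i) c =
  card_from (row B i.+1) c + unmatched_close i (cw_from B c).
Proof.
move=> lt_iB; have [d] := ubnP (n - c); elim: d c => // d IH c lt_ncd.
have [le_nc | lt_cn] := leqP n c; first by rewrite !card_from_out ?cw_from_out.
have /IH : n - c.+1 < d by lia.
rewrite !(card_fromS _ lt_cn) (cw_fromS B lt_cn) unmatched_close_col_word // has_ball_moved //.
case: (has_ball (row B i.+1) c); case: (has_ball (row B i) c);
  case: (unmatched_close i (cw_from B c.+1)) => [|e] /=; lia.
Qed.

Lemma card_from_moved_lb B i c : 0 < i < size B ->
  card_from (row B i.+1) c <= card_from (moved B i) c + card_from (row B i) c.
Proof. by move=> lt_iB; rewrite card_from_moved // leq_addr. Qed.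

Lemma card_from_moved_ub B i c : 0 < i < size B ->
  exists2 c', c <= c' &
    card_from (moved B i) c + card_from (row B i) c' <= card_from (row B i.+1) c'.
Proof.
move=> lt_iB; have [d] := ubnP (n - c); elim: d c => // d IH c lt_ncd.
have [le_nc | lt_cn] := leqP n c; first by exists c; rewrite ?card_from_out.
case moved_c: (has_ball (moved B i) c).
  exists c => //; move: moved_c; rewrite has_ball_moved // => /and3P[in_hi Nin_lo /eqP uc0].
  rewrite card_from_moved // (cw_fromS B lt_cn) unmatched_close_col_word //.
  by rewrite in_hi (negbTE Nin_lo) uc0 addn0.
have /IH [c' le_cc' le_c'] : n - c.+1 < d by lia.
by exists c'; [exact: ltnW | rewrite (card_fromS _ lt_cn) moved_c].
Qed.

Lemma card_from_moved_le B i U c : 0 < i < size B ->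
  (forall c, card_from (row B i.+1) c <= card_from (row B i) c + card_from U c) ->
  card_from (moved B i) c <= card_from U c.
Proof.
move=> lt_iB le_hi; have [c' le_cc' le_moved] := card_from_moved_ub c lt_iB.
have := le_hi c'; have := le_card_from U le_cc'; lia.
Qed.

Definition suffix_le X Y := forall c, card_from X c <= card_from Y c.

Definition suffix_chain B k := forall r, 0 < r < k -> suffix_le (row B r.+1) (row B r).

(* [B] is meant to be e_j (e_(j+1) (... (e_k A))), a stage of computing e^*_[1,k](A). *)
Definition descent_inv A B k j : Prop :=
  [/\ size B = size A,
      forall r, 0 < r -> (r < j) || (k.+1 < r) -> row B r = row A r,
      (exists2 U : {set 'I_n}, [disjoint row A j & U] & row B j = row A j :|: U),
      forall r, j < r <= k.+1 -> suffix_le (row B r) (row A r.-1) &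
      forall r, j < r <= k -> suffix_le (row A r) (row B r)].

Lemma descent_inv_estar A B k j :
  0 < j <= k -> k < size A -> suffix_chain A k ->
  descent_inv A B k j.+1 -> descent_inv A (estar j B) k j.
Proof.
move=> /andP[j_gt0 le_jk] lt_kA chainA [szB sameB [U dU rowU] downB upB].
have lt_jB : 0 < j < size B by rewrite szB j_gt0; lia.
have rowBj : row B j = row A j by apply: sameB; lia.
have hi_le_lo : suffix_le (row (estar j B) j.+1) (row A j).
  move=> c; have := card_from_estar_hi c lt_jB; have := card_from_moved_lb c lt_jB.
  rewrite rowBj; lia.
have rowZ r : 0 < r -> (r < j) || (j.+1 < r) -> row (estar j B) r = row B r.
  by move=> r_gt0 out_r; apply: row_estar_out => //; apply/eqP; lia.
split.
- by rewrite size_estar.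
- by move=> r r_gt0 out_r; rewrite rowZ ?sameB //; lia.
- exists (moved B j); last by rewrite row_estar // eqxx rowBj.
  by have /subsetDP[_] := moved_sub lt_jB; rewrite disjoint_sym rowBj.
- move=> r /andP[lt_jr le_rk]; have [->|Nr] := eqVneq r j.+1; first exact: hi_le_lo.
  by rewrite rowZ; first apply: downB; lia.
move=> r /andP[lt_jr le_rk]; have [-> c|Nr] := eqVneq r j.+1.
  (* The balls that e_j moves down are dominated by those e_(j+1) brought into row j+1. *)
  have hi_le : forall c, card_from (row B j.+1) c <= card_from (row B j) c + card_from U c.
    move=> c'; rewrite rowU card_fromU // rowBj leq_add2r; apply: chainA; lia.
  have := card_from_estar_hi c lt_jB; have := card_from_moved_le c lt_jB hi_le.
  rewrite rowU card_fromU //; lia.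
by rewrite rowZ; first apply: upB; lia.
Qed.

Lemma descent_inv_estars A k j : k < size A -> suffix_chain A k -> 0 < j <= k.+1 ->
  descent_inv A (foldr (@estar n) A (iota j (k.+1 - j))) k j.
Proof.
move=> lt_kA chainA; have [d] := ubnP (k.+1 - j); elim: d j => // d IH j lt_d rng_j.
have [eq_jk | lt_jk] := eqVneq j k.+1.
  rewrite eq_jk subnn; split => //; try by move=> r; lia.
  by exists set0; rewrite ?setU0 // -setI_eq0 setI0.
have le_jk : j <= k by lia.
have -> : k.+1 - j = (k.+1 - j.+1).+1 by lia.
apply: descent_inv_estar => //; first lia.
by apply: IH; lia.
Qed.

Lemma eseg1_spec A k : 0 < k < size A -> suffix_chain A k ->
  [/\ size (eseg1 k A) = size A,
      forall r, k.+1 < r -> row (eseg1 k A) r = row A r,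
      forall r, 0 < r <= k -> suffix_le (row A r) (row (eseg1 k A) r) &
      forall r, 0 < r <= k -> suffix_le (row (eseg1 k A) r.+1) (row A r)].
Proof.
move=> /andP[k_gt0 lt_kA] chainA.
have [|sz same [U dU row1] down up] := descent_inv_estars lt_kA chainA (j := 1); first lia.
rewrite subn1 /= in sz same row1 down up.
split=> // [r lt_kr | r /andP[r_gt0 le_rk] | r rng_r]; first by apply: same; lia.
- have [-> c|] := eqVneq r 1; first by rewrite row1 card_fromU // leq_addr.
  by move=> Nr1; apply: up; lia.
- by apply: down; lia.
Qed.

Lemma suffix_chain_eseg1 A k : 0 < k < size A -> suffix_chain A k ->
  suffix_chain (eseg1 k A) k.+1.
Proof.
move=> rng_k chainA; have [_ _ up down] := eseg1_spec rng_k chainA.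
move=> r rng_r c; apply: leq_trans (down r _ c) (up r _ c); lia.
Qed.

Lemma rhoNkS B k : 0 < k -> rhoNk k.+1 B = eseg1 k (rhoNk k B).
Proof.
move=> k_gt0; rewrite /rhoNk /= -{1}(prednK k_gt0) -[k.-1.+1]addn1 iotaD foldl_cat.
by rewrite add1n prednK.
Qed.

Lemma rhoNk_spec B k : 0 < k <= size B ->
  [/\ size (rhoNk k B) = size B,
      forall r, k < r -> row (rhoNk k B) r = row B r & suffix_chain (rhoNk k B) k].
Proof.
elim: k => // k IH /andP[_ le_kB]; have [-> | k_gt0] := posnP k.
  by split=> // r; lia.
have rng_kB : 0 < k <= size B by rewrite k_gt0 ltnW.
have [sz same chain] := IH rng_kB.
have rng_k : 0 < k < size (rhoNk k B) by rewrite sz k_gt0.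
have [sz' same' _ _] := eseg1_spec rng_k chain.
rewrite rhoNkS //; split; first by rewrite sz'.
  by move=> r lt_kr; rewrite same' ?same //; lia.
exact: suffix_chain_eseg1.
Qed.

Lemma rhoNk_suffix_le B k r : 0 < k < size B -> 0 < r <= k ->
  suffix_le (row (rhoNk k B) r) (row (rhoNk k.+1 B) r) /\
  suffix_le (row (rhoNk k.+1 B) r.+1) (row (rhoNk k B) r).
Proof.
move=> /andP[k_gt0 lt_kB] rng_r; have rng_kB : 0 < k <= size B by rewrite k_gt0 ltnW.
have [sz _ chain] := rhoNk_spec rng_kB.
have rng_k : 0 < k < size (rhoNk k B) by rewrite sz k_gt0.
have [_ _ up down] := eseg1_spec rng_k chain.
by rewrite rhoNkS //; split; [apply: up | apply: down].
Qed.

Definition balls_upto B m := \sum_(1 <= r < m.+1) #|row B r|.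

Lemma balls_uptoS B m : balls_upto B m.+1 = balls_upto B m + #|row B m.+1|.
Proof. by rewrite /balls_upto big_nat_recr. Qed.

Lemma balls_upto_estar B i m : 0 < i < size B -> i < m ->
  balls_upto (estar i B) m = balls_upto B m.
Proof.
move=> lt_iB; have /andP[i_gt0 _] := lt_iB.
elim: m => // m IH; rewrite ltnS leq_eqVlt => /orP[/eqP <- {m IH} | lt_im].
  have lo := card_from_estar_lo 0 lt_iB; have hi := card_from_estar_hi 0 lt_iB.
  have same : balls_upto (estar i B) i.-1 = balls_upto B i.-1.
    by apply: eq_big_nat => r rng_r; rewrite row_estar_out //; apply/eqP; lia.
  rewrite !card_from0 in lo hi; rewrite -(prednK i_gt0) !balls_uptoS prednK // same lo -hi.
  by rewrite -!addnA; congr (_ + (_ + _)); rewrite addnC.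
by rewrite !balls_uptoS IH // row_estar_out //; apply/eqP; lia.
Qed.

Lemma balls_upto_eseg1 A k m : k < size A -> k < m ->
  balls_upto (eseg1 k A) m = balls_upto A m.
Proof.
move=> lt_kA lt_km.
suff [] : size (eseg1 k A) = size A /\ balls_upto (eseg1 k A) m = balls_upto A m by [].
rewrite /eseg1; have : all (fun j => 0 < j <= k) (iota 1 k).
  by apply/allP => j; rewrite mem_iota; lia.
elim: (iota 1 k) => //= j s IH /andP[rng_j /IH[sz sum]].
have lt_j : 0 < j < size (foldr (@estar n) A s) by rewrite sz; lia.
by rewrite size_estar // balls_upto_estar //; lia.
Qed.

Lemma balls_upto_rhoNk B k : 0 < k <= size B -> balls_upto (rhoNk k B) k = balls_upto B k.
Proof.
elim: k => // k IH /andP[_ le_kB]; have [-> // | k_gt0] := posnP k.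
have rng_kB : 0 < k <= size B by rewrite k_gt0 ltnW.
have [sz same _] := rhoNk_spec rng_kB.
rewrite rhoNkS // balls_upto_eseg1 ?sz //.
by rewrite !balls_uptoS IH // same.
Qed.

Lemma Nsz_mono B i r : 0 < i <= size B -> Nsz B i.-1 r <= Nsz B i r.
Proof.
case: i => [|[|k]] // rng_k; first by rewrite {1}/Nsz ifN //; lia.
rewrite /Nsz /=; case: ifP => // rng_r.
rewrite ifT; last by lia.
have rng_kB : 0 < k.+1 < size B by lia.
have [up _] := rhoNk_suffix_le rng_kB rng_r.
by rewrite -!card_from0; apply: up.
Qed.

Lemma Nsz_strip B i r : 0 < i <= size B -> Nsz B i r.+2 <= Nsz B i.-1 r.+1.
Proof.
case: i => [|k] // rng_k; rewrite /Nsz /=; case: ifP => // rng_r.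
have rng_kB : 0 < k < size B by lia.
have rng_r1 : 0 < r.+1 <= k by lia.
have [_ down] := rhoNk_suffix_le rng_kB rng_r1.
by rewrite ifT -?card_from0; [apply: down | lia].
Qed.

Lemma sum_Nsz B i : i <= size B ->
  \sum_(1 <= r < (size B).+1) Nsz B i r = balls_upto B i.
Proof.
move=> le_iB; have [-> | i_gt0] := posnP i.
  by rewrite /balls_upto [RHS]big_geq // big1 // => r _; rewrite /Nsz ifN //; lia.
rewrite (@big_cat_nat _ _ _ i.+1) //= [X in _ + X]big1_seq ?addn0; last first.
  by move=> r; rewrite mem_index_iota => rng_r; rewrite /Nsz ifN //; lia.
rewrite -balls_upto_rhoNk ?i_gt0 //.
by apply: eq_big_nat => r rng_r; rewrite /Nsz ifT.
Qed.

Lemma row_out B r : size B < r -> row B r = set0.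
Proof. by move=> lt_Br; rewrite /row nth_default //; lia. Qed.

Lemma rhoN_spec B : 0 < size B ->
  size (rhoN B) = size B /\ suffix_chain (rhoN B) (size B).
Proof.
move=> B_gt0; have rng_B : 0 < size B <= size B by rewrite B_gt0 /=.
by have [] := rhoNk_spec rng_B.
Qed.

Lemma Nsz_size B r : 0 < size B -> 0 < r -> Nsz B (size B) r = #|row (rhoN B) r|.
Proof.
move=> B_gt0 r_gt0; rewrite /Nsz r_gt0 /=; case: leqP => // lt_Br.
have [sz _] := rhoN_spec B_gt0.
by rewrite row_out ?cards0 // -/(rhoN B) sz.
Qed.

Lemma suffix_le_rhoN B r : 0 < size B -> 0 < r ->
  suffix_le (row (rhoN B) r.+1) (row (rhoN B) r).
Proof.
move=> B_gt0 r_gt0; have [sz chain] := rhoN_spec B_gt0.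
have [lt_rB | le_Br] := ltnP r (size B); first by apply: chain; rewrite r_gt0.
move=> c; rewrite row_out ?sz //.
by apply: leq_trans (le_card_from _ (leq0n c)) _; rewrite card_from0 cards0.
Qed.

Lemma count_rowcols M r c :
  count (fun x => c <= x) (rowcols M r) = card_from (row M r) c.
Proof.
rewrite /rowcols count_sort count_map -sum1_count big_enum_cond /card_from.
rewrite big_geq_mkord big_mkcond [RHS]big_mkcond /=.
by apply: eq_bigr => j _; rewrite has_ball_ord; case: (j \in row M r); case: (c <= j).
Qed.

Lemma maj_aux_eq0 M k r lab : k < r ->
  (forall r, 0 < r -> suffix_le (row M r.+1) (row M r)) ->
  perm_eq (map fst lab) (rowcols M r) -> maj_aux M k r lab = 0.
Proof.
move=> lt_kr chainM; elim: k r lab lt_kr => [|k IH] r lab lt_kr perm_lab //=.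
have sorted_below : sorted leq (rowcols M r.-1) by apply: sort_sorted; exact: leq_total.
have hall c : count (fun x => c <= x) (map fst (sort lab_ord lab)) <=
              count (fun x => c <= x) (rowcols M r.-1).
  rewrite !count_map count_sort -count_map (permP perm_lab) !count_rowcols.
  by rewrite -{1}(ltn_predK lt_kr); apply: chainM; lia.
rewrite /pair_step -/(pair_fold r).
have := pair_fold_nowrap r [::] 0 sorted_below hall.
case: foldl => [[av nl] m] [-> perm_nl]; rewrite add0n; apply: IH; first lia.
by rewrite map_cat -map_comp map_id.
Qed.

Lemma maj_eq0 M :
  (forall r, 0 < r -> suffix_le (row M r.+1) (row M r)) -> maj M = 0.
Proof.
move=> chainM; rewrite /maj; case: (size M) => [|L] //=.
by apply: maj_aux_eq0 => //; rewrite -map_comp map_id.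
Qed.
End Balls.

Definition rhoN_shape n (B : seq {set 'I_n}) :=
  conj_shape (fun r => #|row (rhoN B) r|) (size B).

Section RhoShape.
Variables (n : nat) (B : seq {set 'I_n}).
Hypothesis B_gt0 : 0 < size B.

Lemma card_row_rhoN_nonincr r : 0 < r -> #|row (rhoN B) r.+1| <= #|row (rhoN B) r|.
Proof. by move=> r_gt0; rewrite -!card_from0; apply: suffix_le_rhoN. Qed.

Lemma card_row_rhoN_out r : size B < r -> #|row (rhoN B) r| = 0.
Proof. by move=> lt_Br; rewrite row_out ?cards0 // (rhoN_spec B_gt0).1. Qed.

Lemma conj_part_rhoN_shape r : 0 < r -> conj_part (rhoN_shape B) r = #|row (rhoN B) r|.
Proof. exact: conj_part_conj_shape card_row_rhoN_nonincr card_row_rhoN_out r. Qed.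

Lemma rhoN_MLQ0 : in_MLQ0 (rhoN_shape B) (rhoN B).
Proof.
split; last by apply: maj_eq0 => r; apply: suffix_le_rhoN.
split; first by apply: conj_shape_partition; exact: card_row_rhoN_out.
split; last by move=> r r_gt0; rewrite conj_part_rhoN_shape.
by rewrite size_conj_shape; apply: leq_trans (max_card _) _; rewrite card_ord.
Qed.

Lemma sum_Nsz_diff i : 0 < i <= size B ->
  \sum_(1 <= r < (size B).+1) (Nsz B i r - Nsz B i.-1 r) = #|row B i|.
Proof.
move=> rng_i; have /andP[i_gt0 le_iB] := rng_i.
have : \sum_(1 <= r < (size B).+1) (Nsz B i r - Nsz B i.-1 r) +
       \sum_(1 <= r < (size B).+1) Nsz B i.-1 r = \sum_(1 <= r < (size B).+1) Nsz B i r.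
  by rewrite -big_split; apply: eq_bigr => r _ /=; rewrite subnK // Nsz_mono.
rewrite sum_Nsz ?(leq_trans (leq_pred i)) // sum_Nsz //.
by have := balls_uptoS B i.-1; rewrite prednK // => ->; rewrite addnC => /addnI.
Qed.

Lemma rhoQ_ssyt :
  is_ssyt (rhoQ B) (conj_part (rhoN_shape B))
    (fun i => if 0 < i <= size B then #|row B i| else 0).
Proof.
have Nsz0 r : Nsz B 0 r = 0 by rewrite /Nsz; case: ifP => //; lia.
have Nsz_monoS i r : i < size B -> Nsz B i r <= Nsz B i.+1 r.
  by move=> lt_iB; apply: (@Nsz_mono _ _ i.+1); lia.
have -> : rhoQ B = strip_tableau (Nsz B) (size B) by [].
apply: (strip_tableau_ssyt Nsz0 Nsz_monoS (@Nsz_strip _ B)) => [r r_gt0 | i].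
  rewrite conj_part_rhoN_shape //; case: leqP => [le_rB | lt_Br].
    by rewrite Nsz_size.
  exact: card_row_rhoN_out.
rewrite count_mem_strip_tableau //; case: ifP => // rng_i.
by rewrite sum_Nsz_diff.
Qed.
End RhoShape.

Unset Implicit Arguments.

Theorem proposition4p8 (L n : nat) (B : seq {set 'I_n}) :
  0 < L -> 0 < n -> size B = L ->
  exists mu : seq nat,
    in_MLQ0 mu (rhoN B) /\
    (forall i r, 0 < i <= L -> Nsz B i.-1 r <= Nsz B i r) /\
    is_ssyt (rhoQ B) (conj_part mu)
      (fun i => if 0 < i <= L then #|row B i| else 0).
Proof.
move=> L_gt0 _ sizeB; subst L; exists (rhoN_shape B).
split; first exact: rhoN_MLQ0.
by split; [move=> i r; apply: Nsz_mono | exact: rhoQ_ssyt].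
Qed.
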